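(* Let $k$ be an algebraically closed field of characteristic $0$ and let $(\mathcal A,-)$ be an associative torus with involution over $k$. If $(\mathcal A,-)$ is not isomorphic (as an algebra with involution) to $(\mathcal Q(-1),\natural)\otimes(R_q,1)$ for any $q\ge0$, then $[\mathcal A_-,\mathcal A_-]\subseteq\mathcal A_+\mathcal A_+$.
   Context: Let $\Lambda$ be a finitely generated free abelian group. An associative $\Lambda$-torus is a $\Lambda$-graded unital associative $k$-algebra $\mathcal A=\bigoplus_{\lambda\in\Lambda}\mathcal A^\lambda$ in which every $\mathcal A^\lambda$ is spanned by an invertible element. An associative torus with involution $(\mathcal A,-)$ is an associative torus together with a graded involution (a grading-preserving $k$-linear anti-automorphism of period $2$). $\mathcal A_+=\{x:\bar x=x\}$, $\mathcal A_-=\{x:\bar x=-x\}$; $[\mathcal A_-,\mathcal A_-]$ is the span of commutators $xy-yx$ with $x,y\in\mathcal A_-$, and $\mathcal A_+\mathcal A_+$ is the span of products $xy$ with $x,y\in\mathcal A_+$. $R_q=k[t_1^{\pm1},\dots,t_q^{\pm1}]$ with its $\mathbb Z^q$-grading and trivial involution $1$. $\mathcal Q(-1)$ is the $\mathbb Z^2$-graded algebra generated by $x_1^{\pm1},x_2^{\pm1}$ with relations $x_ix_i^{-1}=x_i^{-1}x_i=1$ and $x_1x_2=-x_2x_1$; $\natural$ is its involution with $x_1^\natural=-x_1$, $x_2^\natural=-x_2$. Tensor products of associative tori with involution are graded by the direct sum of the grading groups, with the tensor product involution. *)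

From HB Require Import structures.
From mathcomp Require Import all_boot all_order all_algebra.
Set Implicit Arguments. Unset Strict Implicit. Unset Printing Implicit Defensive.
Import Order.TTheory GRing.Theory Num.Theory.
Local Open Scope ring_scope.

(* The grading group Lambda (f.g. free abelian) is taken to be Z^n = 'rV[int]_n. *)
Definition lattice (n : nat) := 'rV[int]_n.

(* A Lambda-grading of A is given by the family of homogeneous components
   comp l (as predicates on A).  (A, comp) is an associative Lambda-torus:
   - each component A^l is spanned by an invertible element,
   - A^l A^m  <=  A^(l+m),
   - A is the direct sum of the A^l (every element is a finite sum of
     homogeneous elements, and homogeneous elements of pairwise distinct
     degrees summing to 0 are all 0). *)
Definition assoc_torus (k : fieldType) (A : unitAlgType k) (n : nat)
    (comp : lattice n -> A -> Prop) : Prop :=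
  [/\ (forall l, exists u : A, u \is a GRing.unit /\
          (forall x, comp l x <-> exists c : k, x = c *: u)),
      (forall l m x y, comp l x -> comp m y -> comp (l + m) (x * y)),
      (forall x : A, exists (s : seq (lattice n)) (f : lattice n -> A),
          (forall l, comp l (f l)) /\ x = \sum_(l <- s) f l) &
      (forall (s : seq (lattice n)) (f : lattice n -> A), uniq s ->
          (forall l, comp l (f l)) -> \sum_(l <- s) f l = 0 ->
          forall l, l \in s -> f l = 0)].

Definition graded_involution (k : fieldType) (A : unitAlgType k) (n : nat)
    (comp : lattice n -> A -> Prop) (inv : A -> A) : Prop :=
  [/\ (forall (a : k) (x y : A), inv (a *: x + y) = a *: inv x + inv y),
      (forall x y : A, inv (x * y) = inv y * inv x),
      inv 1 = 1,
      (forall x : A, inv (inv x) = x) &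
      (forall l x, comp l x -> comp l (inv x))].

(* (A, inv) is isomorphic, as a k-algebra with involution, to
   (Q(-1), natural) (x) (R_q, 1).  The latter algebra is presented by the
   invertible generators x1, x2, t_1..t_q with x1 x2 = - x2 x1 and all other
   pairs commuting, its monomials x1^a x2^b t^c (a, b in Z, c in Z^q) form a
   k-basis, and its involution is the anti-automorphism with x1 |-> -x1,
   x2 |-> -x2, t_i |-> t_i.  An isomorphism from it onto A is therefore the
   same as a choice of images X1, X2, T_i in A of the generators satisfying
   the defining relations, compatible with the involutions, and such that
   the image monomials form a k-basis of A. *)
Definition monomial (k : fieldType) (A : unitAlgType k) (q : nat)
    (X1 X2 : A) (T : 'I_q -> A) (e : int * int * 'rV[int]_q) : A :=
  X1 ^ e.1.1 * X2 ^ e.1.2 * \prod_(i < q) T i ^ (e.2 0 i).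

Definition iso_Qm1_tensor_R (k : fieldType) (A : unitAlgType k)
    (inv : A -> A) (q : nat) : Prop :=
  exists (X1 X2 : A) (T : 'I_q -> A),
    (X1 \is a GRing.unit /\ X2 \is a GRing.unit /\
     (forall i, T i \is a GRing.unit)) /\
    (X1 * X2 = - (X2 * X1) /\
     (forall i, X1 * T i = T i * X1) /\
     (forall i, X2 * T i = T i * X2) /\
     (forall i j, T i * T j = T j * T i)) /\
    (inv X1 = - X1 /\ inv X2 = - X2 /\ (forall i, inv (T i) = T i)) /\
    (forall x : A, exists (s : seq (int * int * 'rV[int]_q))
          (c : int * int * 'rV[int]_q -> k),
        x = \sum_(e <- s) c e *: monomial X1 X2 T e) /\
    (forall (s : seq (int * int * 'rV[int]_q)) (c : int * int * 'rV[int]_q -> k),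
        uniq s -> \sum_(e <- s) c e *: monomial X1 X2 T e = 0 ->
        forall e, e \in s -> c e = 0).

Definition in_span_sym_products (k : fieldType) (A : unitAlgType k)
    (inv : A -> A) (z : A) : Prop :=
  exists s : seq (k * A * A),
    (forall p, p \in s -> inv p.1.2 = p.1.2 /\ inv p.2 = p.2) /\
    z = \sum_(p <- s) p.1.1 *: (p.1.2 * p.2).

(* Pick a unit [u_l] spanning each component [A^l].  As the components are
   one-dimensional and the involution is graded, [bar u_l = +-u_l] ([skew l])
   and [u_m u_l = +-u_l u_m] ([anti l m]), with
   [skew (l + m) = skew l + skew m + anti l m] over F_2.
   For skew homogeneous [g], [h] of degrees [l], [m], the commutator [gh - hg] is
   [0] or [2gh]; when some [nu] makes [l + nu] and [m - nu] symmetric degrees,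
   [gh] is a multiple of the product [u_(l+nu) u_(m-nu)] of symmetric elements.
   If no such [nu] exists for some anticommuting skew [la], [mu], then every
   degree outside the joint kernel of [anti la] and [anti mu] is skew while the
   kernel consists of symmetric central degrees; a basis of [Z^n] adapted to
   [la], [mu] and that kernel presents [A] as [Q(-1) (x) R_(n-2)]. *)

From HB Require Import structures.
From mathcomp Require Import all_boot all_order all_algebra perm.
From Stdlib Require Import IndefiniteDescription Classical.
Set Implicit Arguments. Unset Strict Implicit. Unset Printing Implicit Defensive.
Import Order.TTheory GRing.Theory Num.Theory.
Local Open Scope ring_scope.

Section ParityCharacter.
Variables (n : nat) (chi : 'rV[int]_n -> bool).
Hypothesis chiD : {morph chi : a b / a + b >-> a (+) b}.

Lemma parity_char0 : chi 0 = false.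
Proof. by have := chiD 0 0; rewrite addr0; case: (chi 0). Qed.

Lemma parity_charN a : chi (- a) = chi a.
Proof.
have := chiD a (- a); rewrite subrr parity_char0.
by case: (chi a); case: (chi (- a)).
Qed.

Lemma parity_charZ (z : int) a : chi (z *: a) = odd `|z|%N && chi a.
Proof.
have charMn (m : nat) : chi (m%:Z *: a) = odd m && chi a.
  elim: m => [|m IHm]; first by rewrite scale0r parity_char0.
  by rewrite intS scalerDl scale1r chiD IHm /=; case: (odd m); case: (chi a).
by case: z => m; rewrite ?NegzE ?scaleNr ?parity_charN charMn.
Qed.

Lemma parity_char_mul (w : 'rV[int]_n) (M : 'M[int]_n) :
  chi (w *m M) = \big[addb/false]_i (odd `|w ord0 i|%N && chi (row i M)).
Proof.
rewrite mulmx_sum_row (big_morph chi chiD parity_char0).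
by apply: eq_bigr => i _; rewrite parity_charZ.
Qed.

End ParityCharacter.

Lemma bigxor_exists n (F : 'I_n -> bool) : \big[addb/false]_i F i -> exists i, F i.
Proof.
move=> h; apply/existsP; apply: contraLR h => /existsPn hF.
by rewrite big1 // => i _; apply/negbTE.
Qed.

Lemma bigxor1 n (F : 'I_n -> bool) i : (forall j, j != i -> F j = false) ->
  \big[addb/false]_j F j = F i.
Proof. by move=> hF; rewrite (bigD1 i) //= big1 ?addbF // => j /andP[_]. Qed.

Definition transvection n (c : 'I_n) (P : pred 'I_n) : 'M[int]_n :=
  1%:M - \matrix_(a, b) ((b == c) && P a && (a != c))%:R.

Lemma transvection_unit n c P : @transvection n c P \in unitmx.
Proof.
set N := \matrix_(a, b) ((b == c) && P a && (a != c))%:R : 'M[int]_n.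
have NN : N *m N = 0.
  apply/matrixP=> a b; rewrite !mxE big1 // => d _; rewrite !mxE.
  by case: (eqVneq d c) => [->|]; rewrite ?eqxx ?andbF ?mulr0 ?mul0r.
have /mulmx1_unit[] // : transvection c P *m (1%:M + N) = 1%:M.
by rewrite mulmxBl mul1mx mulmxDr mulmx1 NN addr0 addrK.
Qed.

Lemma row_transvection_mul n c P k (E : 'M[int]_n) :
  row k (transvection c P *m E) = row k E - (P k && (k != c))%:R *: row c E.
Proof.
have rowT : row k (transvection c P) =
    delta_mx 0 k - (P k && (k != c))%:R *: delta_mx 0 c.
  apply/rowP=> b; rewrite !mxE eqxx /= [k == b]eq_sym -andbA.
  by case: (b == c); case: (P k && _); rewrite ?mulr1 ?mulr0.
by rewrite row_mul rowT mulmxBl -scalemxAl -!rowE.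
Qed.

Lemma parity_char_transvection n chi c P k (E : 'M[int]_n) :
    {morph chi : a b / a + b >-> a (+) b} ->
  chi (row k (transvection c P *m E)) =
    chi (row k E) (+) (P k && (k != c) && chi (row c E)).
Proof.
move=> chiD; rewrite row_transvection_mul chiD parity_charN //.
by case: (P k && _); rewrite ?scale1r ?scale0r ?parity_char0 ?addbF.
Qed.

Section AdaptedBasis.
Variables (n : nat) (chi1 chi2 : 'rV[int]_n -> bool).
Hypotheses (chi1D : {morph chi1 : a b / a + b >-> a (+) b})
           (chi2D : {morph chi2 : a b / a + b >-> a (+) b}).

Lemma parity_char_pivot mu : chi1 mu ->
  exists i (E : 'M[int]_n), E \in unitmx /\ forall k, chi1 (row k E) = (k == i).
Proof.
move=> chi1mu; pose P a := chi1 (row a (1%:M : 'M[int]_n)).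
have [i Pi] : exists i, P i.
  move: chi1mu; rewrite -[mu]mulmx1 parity_char_mul //.
  by case/bigxor_exists=> i /andP[_ Pi]; exists i.
exists i, (transvection i P *m 1%:M); split.
  by rewrite unitmx_mul transvection_unit unitmx1.
move=> k; rewrite parity_char_transvection // -/(P k) -/(P i) Pi andbT.
by case: (eqVneq k i) => [->|_]; rewrite ?eqxx ?andbF ?addbF ?andbT ?addbb.
Qed.

Lemma parity_char_other_row lam i (E : 'M[int]_n) : E \in unitmx ->
    (forall k, chi1 (row k E) = (k == i)) -> ~~ chi1 lam -> chi2 lam ->
  exists2 j, j != i & chi2 (row j E).
Proof.
move=> Eu chi1E lam1 lam2.
case: (pickP (fun j => (j != i) && chi2 (row j E))) => [j /andP[]|none].
  by exists j.
set w := lam *m invmx E; have lamE : lam = w *m E by rewrite mulmxKV.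
have chi1lam : chi1 lam = odd `|w ord0 i|%N.
  rewrite lamE parity_char_mul // (bigxor1 (i := i)) ?chi1E ?eqxx ?andbT // => j ji.
  by rewrite chi1E (negbTE ji) andbF.
have chi2lam : chi2 lam = odd `|w ord0 i|%N && chi2 (row i E).
  rewrite lamE parity_char_mul // (bigxor1 (i := i)) // => j ji.
  by move: (none j); rewrite ji /= => ->; rewrite andbF.
by move: lam1 lam2; rewrite chi1lam chi2lam => /negbTE ->.
Qed.

Lemma parity_chars_adapted_basis lam mu : chi1 mu -> ~~ chi1 lam -> chi2 lam ->
  exists (i j : 'I_n) (E : 'M[int]_n),
    [/\ i != j, E \in unitmx, chi1 (row i E), ~~ chi1 (row j E) & chi2 (row j E)]
    /\ forall k, k != i -> k != j -> ~~ chi1 (row k E) && ~~ chi2 (row k E).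
Proof.
move=> chi1mu lam1 lam2.
have [i [E1 [E1u chi1E1]]] := parity_char_pivot chi1mu.
have [j ji chi2j] := parity_char_other_row E1u chi1E1 lam1 lam2.
pose P a := chi2 (row a E1) && (a != i).
have chi1E k : chi1 (row k (transvection j P *m E1)) = (k == i).
  by rewrite parity_char_transvection // !chi1E1 (negbTE ji) andbF addbF.
have chi2E k : chi2 (row k (transvection j P *m E1)) =
    chi2 (row k E1) && ~~ ((k != i) && (k != j)).
  rewrite parity_char_transvection // /P chi2j andbT.
  by case: (chi2 _); case: (k != i); case: (k != j).
exists i, j, (transvection j P *m E1); split; first split.
- by rewrite eq_sym.
- by rewrite unitmx_mul transvection_unit.
- by rewrite chi1E eqxx.
- by rewrite chi1E (negbTE ji).
- by rewrite chi2E chi2j eqxx andbF.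
by move=> k ki kj; rewrite chi1E chi2E (negbTE ki) (negbTE kj) andbF.
Qed.

End AdaptedBasis.

Section GradedInvolution.
Variables (k : fieldType) (A : unitAlgType k) (n : nat).
Variables (comp : lattice n -> A -> Prop) (inv : A -> A).
Hypothesis char_neq2 : 2 \notin [pchar k].
Hypotheses (htorus : assoc_torus comp) (hinv : graded_involution comp inv).

Lemma two_neq0 : 2%:R != 0 :> k.
Proof. by move: char_neq2; rewrite inE /=. Qed.

Lemma sign_inj : injective (fun b : bool => (-1) ^+ b : k).
Proof.
have one_neqN1 : (1 : k) != -1.
  by rewrite -subr_eq0 opprK -mulr2n two_neq0.
by case=> [] [] //= /eqP; rewrite ?expr1 ?expr0 ?(negbTE one_neqN1) // eq_sym
  (negbTE one_neqN1).
Qed.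

Lemma scale_inj (x : A) : x != 0 -> injective (fun a : k => a *: x).
Proof.
move=> x0 a b /= /eqP; rewrite -subr_eq0 -scalerBl scaler_eq0 (negbTE x0) orbF.
by rewrite subr_eq0 => /eqP.
Qed.

Lemma unit_neq0 (x : A) : x \is a GRing.unit -> x != 0.
Proof. by apply: contraTneq => ->; rewrite unitr0. Qed.

Lemma exists_hom_unit l :
  exists u : A, u \is a GRing.unit /\ forall x, comp l x <-> exists c : k, x = c *: u.
Proof. by case: htorus. Qed.

Definition hom_unit l : A :=
  proj1_sig (constructive_indefinite_description _ (exists_hom_unit l)).

Lemma hom_unit_spec l : hom_unit l \is a GRing.unit /\
  forall x, comp l x <-> exists c : k, x = c *: hom_unit l.
Proof. exact: proj2_sig (constructive_indefinite_description _ (exists_hom_unit l)). Qed.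

Lemma hom_unit_unit l : hom_unit l \is a GRing.unit.
Proof. by case: (hom_unit_spec l). Qed.

Lemma hom_unit_neq0 l : hom_unit l != 0.
Proof. exact/unit_neq0/hom_unit_unit. Qed.

Lemma hom_unitM_neq0 l m : hom_unit l * hom_unit m != 0.
Proof. by apply: unit_neq0; rewrite unitrMl ?hom_unit_unit. Qed.

Lemma compP l x : comp l x <-> exists c : k, x = c *: hom_unit l.
Proof. by case: (hom_unit_spec l). Qed.

Lemma comp_hom_unit l : comp l (hom_unit l).
Proof. by apply/compP; exists 1; rewrite scale1r. Qed.

Lemma compZ l c x : comp l x -> comp l (c *: x).
Proof. by case/compP=> a ->; apply/compP; exists (c * a); rewrite scalerA. Qed.

Lemma compD l x y : comp l x -> comp l y -> comp l (x + y).
Proof.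
by case/compP=> a ->; case/compP=> b ->; apply/compP; exists (a + b); rewrite scalerDl.
Qed.

Lemma compM l m x y : comp l x -> comp m y -> comp (l + m) (x * y).
Proof. by case: htorus => _ compM _ _; apply: compM. Qed.

Lemma comp_proportional l x y : comp l x -> comp l y -> y != 0 ->
  exists c, x = c *: y.
Proof.
case/compP=> a ->; case/compP=> b -> y0.
have b0 : b != 0 by apply: contraNneq y0 => ->; rewrite scale0r.
by exists (a / b); rewrite scalerA mulfVK.
Qed.

Lemma comp01 : comp 0 1.
Proof.
have [c uu] : exists c, hom_unit 0 * hom_unit 0 = c *: hom_unit 0.
  apply: comp_proportional (comp_hom_unit 0) (hom_unit_neq0 0).
  by rewrite -[X in comp X](addr0 0); apply: compM; apply: comp_hom_unit.
have u0E : hom_unit 0 = c *: 1.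
  by apply: (mulIr (hom_unit_unit 0)); rewrite uu -scalerAl mul1r.
have c0 : c != 0 by apply: contraNneq (hom_unit_neq0 0) => c0; rewrite u0E c0 scale0r.
by rewrite -[1](scalerK c0) -u0E; apply/compZ/comp_hom_unit.
Qed.

Lemma compV l y : comp l y -> y \is a GRing.unit -> comp (- l) y^-1.
Proof.
move=> ly yU; have [c uy] : exists c, hom_unit (- l) * y = c *: 1.
  apply: comp_proportional comp01 (oner_neq0 _).
  by rewrite -(addNr l); apply: compM (comp_hom_unit _) ly.
have uyU : hom_unit (- l) * y \is a GRing.unit by rewrite unitrMl ?hom_unit_unit.
have c0 : c != 0.
  by apply: contraNneq (unit_neq0 uyU) => c0; rewrite uy c0 scale0r eqxx.
have -> : y^-1 = c^-1 *: hom_unit (- l).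
  by rewrite -(mulrK yU (hom_unit _)) uy -scalerAl mul1r scalerA mulVf ?scale1r.
exact/compZ/comp_hom_unit.
Qed.

Lemma comp_exprz l x (z : int) : comp l x -> x \is a GRing.unit -> comp (z *: l) (x ^ z).
Proof.
move=> lx xU; have compXn (j : nat) : comp (j%:Z *: l) (x ^+ j).
  elim: j => [|j IHj]; first by rewrite scale0r expr0; apply: comp01.
  by rewrite intS scalerDl scale1r exprS; apply: compM.
case: z => j; first exact: compXn.
by rewrite NegzE scaleNr; apply: compV; rewrite ?unitrX.
Qed.

Lemma comp_prod (I : Type) (r : seq I) (F : I -> A) (deg : I -> lattice n) :
  (forall i, comp (deg i) (F i)) -> comp (\sum_(i <- r) deg i) (\prod_(i <- r) F i).
Proof.
move=> hF; elim: r => [|i r IHr]; first by rewrite !big_nil; apply: comp01.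
by rewrite !big_cons; apply: compM.
Qed.

Lemma inv_linear : linear inv. Proof. by case: hinv. Qed.
HB.instance Definition _ := GRing.isLinear.Build k A A *:%R inv inv_linear.

Lemma invZ a x : inv (a *: x) = a *: inv x. Proof. exact: linearZ. Qed.
Lemma invB x y : inv (x - y) = inv x - inv y. Proof. exact: linearB. Qed.
Lemma inv_sum (I : Type) (r : seq I) (F : I -> A) :
  inv (\sum_(i <- r) F i) = \sum_(i <- r) inv (F i).
Proof. exact: linear_sum. Qed.

Lemma invM x y : inv (x * y) = inv y * inv x. Proof. by case: hinv. Qed.
Lemma invK : involutive inv. Proof. by case: hinv. Qed.
Lemma comp_inv l x : comp l x -> comp l (inv x). Proof. by case: hinv => _ _ _ _; apply. Qed.

Definition skew l : bool := inv (hom_unit l) == - hom_unit l.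

(* [u_m u_l = (-1)^(anti l m) u_l u_m], see commute_hom_unit. *)
Definition anti l m : bool := skew (l + m) (+) skew l (+) skew m.

Lemma inv_hom_unit l : inv (hom_unit l) = (-1) ^+ skew l *: hom_unit l.
Proof.
have [c uc] := comp_proportional (comp_inv (comp_hom_unit l)) (comp_hom_unit l)
  (hom_unit_neq0 l).
have /eqP : c ^+ 2 = 1.
  apply: (scale_inj (hom_unit_neq0 l)) => /=.
  have := congr1 inv uc; rewrite invK invZ uc scale1r => {2}->.
  by rewrite scalerA -expr2.
have uNu : hom_unit l != - hom_unit l.
  by rewrite -addr_eq0 -mulr2n -scaler_nat scaler_eq0 negb_or two_neq0 hom_unit_neq0.
rewrite sqrf_eq1 /skew uc => /orP[] /eqP ->.
  by rewrite scale1r (negbTE uNu) expr0 scale1r.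
by rewrite scaleN1r eqxx expr1 scaleN1r.
Qed.

Lemma sym_hom_unit l : ~~ skew l -> inv (hom_unit l) = hom_unit l.
Proof. by move/negbTE=> sl; rewrite inv_hom_unit sl scale1r. Qed.

Lemma skew_hom l g : comp l g -> g != 0 -> inv g = - g -> skew l.
Proof.
case/compP=> a -> g0; have a0 : a != 0 by apply: contraNneq g0 => ->; rewrite scale0r.
rewrite invZ inv_hom_unit scalerA -scalerN -scaleN1r scalerA.
move/(scale_inj (hom_unit_neq0 l))/(mulfI a0) => sk.
suff /sign_inj -> : (-1) ^+ skew l = (-1) ^+ true :> k by [].
by rewrite sk expr1.
Qed.

Lemma commute_hom_unit l m :
  hom_unit m * hom_unit l = (-1) ^+ anti l m *: (hom_unit l * hom_unit m).
Proof.
have [c uc] := comp_proportional (compM (comp_hom_unit l) (comp_hom_unit m))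
  (comp_hom_unit (l + m)) (hom_unit_neq0 _).
have [d ud] : exists d, hom_unit m * hom_unit l = d *: hom_unit (l + m).
  apply: comp_proportional (comp_hom_unit _) (hom_unit_neq0 _).
  by rewrite addrC; apply: compM; apply: comp_hom_unit.
have cd : (-1) ^+ skew m * (-1) ^+ skew l * d = c * (-1) ^+ skew (l + m) :> k.
  apply: (scale_inj (hom_unit_neq0 (l + m))) => /=.
  have := congr1 inv uc; rewrite invM !inv_hom_unit -scalerAl -scalerAr scalerA ud.
  by rewrite invZ inv_hom_unit !scalerA => ->.
rewrite ud; have -> : d = (-1) ^+ skew l * ((-1) ^+ skew m * (c * (-1) ^+ skew (l + m))).
  by rewrite -cd -!mulrA !signrMK.
rewrite uc scalerA /anti !signr_addb; congr (_ *: _).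
by rewrite [c * _]mulrC !mulrA [_ * (-1) ^+ skew (l + m)]mulrC !mulrA.
Qed.

Lemma commute_hom l m x y : comp l x -> comp m y ->
  y * x = (-1) ^+ anti l m *: (x * y).
Proof.
case/compP=> a ->; case/compP=> b ->.
rewrite -!scalerAl -!scalerAr commute_hom_unit !scalerA.
by rewrite [b * a * _]mulrC (mulrC b) mulrA.
Qed.

Lemma antiC l m : anti l m = anti m l.
Proof. by rewrite /anti addrC -!addbA [skew l (+) _]addbC. Qed.

Lemma anti_ll l : anti l l = false.
Proof.
apply: sign_inj; apply: (scale_inj (hom_unitM_neq0 l l)) => /=.
by rewrite expr0 scale1r -commute_hom_unit.
Qed.

Lemma antiD l : {morph anti l : m m' / m + m' >-> m (+) m'}.
Proof.
move=> m m'; apply: sign_inj; rewrite /= signr_addb.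
have uU : hom_unit l * (hom_unit m * hom_unit m') \is a GRing.unit.
  by rewrite !unitrMl ?hom_unit_unit.
apply: (scale_inj (unit_neq0 uU)) => /=.
rewrite -(commute_hom (comp_hom_unit l) (compM (comp_hom_unit m) (comp_hom_unit m'))).
rewrite -mulrA (commute_hom_unit l m') -scalerAr [hom_unit m * (_ * _)]mulrA.
rewrite (commute_hom_unit l m) -scalerAl.
by rewrite scalerA mulrA mulrC.
Qed.

Lemma anti0 l : anti l 0 = false. Proof. exact: (parity_char0 (antiD l)). Qed.

Lemma antiN l m : anti l (- m) = anti l m. Proof. exact: (parity_charN (antiD l) m). Qed.

Lemma antiB l m m' : anti l (m - m') = anti l m (+) anti l m'.
Proof. by rewrite antiD antiN. Qed.

Lemma anti_if l (b : bool) m : anti l (if b then m else 0) = b && anti l m.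
Proof. by case: b; rewrite ?anti0. Qed.

Lemma skewD l m : skew (l + m) = skew l (+) skew m (+) anti l m.
Proof. by rewrite /anti; case: (skew (l + m)); case: (skew l); case: (skew m). Qed.

Lemma skewN l : skew (- l) = skew l.
Proof.
have skew0 : skew 0 = false by have := anti_ll 0; rewrite /anti addr0; case: (skew 0).
have := anti_ll l; rewrite -antiN /anti subrr skew0.
by case: (skew l); case: (skew (- l)).
Qed.

Section SymmetricProducts.

Local Notation sym_span := (in_span_sym_products inv).

Lemma sym_span0 : sym_span 0.
Proof. by exists [::]; rewrite big_nil. Qed.

Lemma sym_spanD a b : sym_span a -> sym_span b -> sym_span (a + b).
Proof.
case=> s1 [s1sym ->] [s2 [s2sym ->]]; exists (s1 ++ s2); rewrite big_cat.
by split=> // p; rewrite mem_cat => /orP[/s1sym|/s2sym].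
Qed.

Lemma sym_spanZ c a : sym_span a -> sym_span (c *: a).
Proof.
case=> s [ssym ->]; exists [seq (c * p.1.1, p.1.2, p.2) | p <- s]; split.
  by move=> _ /mapP[p /ssym psym ->].
by rewrite big_map scaler_sumr; apply: eq_bigr => p _; rewrite scalerA.
Qed.

Lemma sym_span_sum (I : Type) (r : seq I) (F : I -> A) :
  (forall i, sym_span (F i)) -> sym_span (\sum_(i <- r) F i).
Proof.
move=> hF; elim: r => [|i r IHr]; first by rewrite big_nil; apply: sym_span0.
by rewrite big_cons; apply: sym_spanD.
Qed.

Lemma sym_span_mul x y : inv x = x -> inv y = y -> sym_span (x * y).
Proof.
move=> xsym ysym; exists [:: (1, x, y)]; rewrite big_seq1 scale1r.
by split=> // p; rewrite inE => /eqP ->.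
Qed.

Definition splittable := forall l m, skew l -> skew m -> anti l m ->
  exists nu, ~~ skew (l + nu) && ~~ skew (m - nu).

Lemma commutator_hom_sym_span l m g h : splittable -> comp l g -> comp m h ->
  inv g = - g -> inv h = - h -> sym_span (g * h - h * g).
Proof.
move=> hsplit lg mh gskew hskew; rewrite (commute_hom lg mh).
case anti_lm : (anti l m); last by rewrite scale1r subrr; apply: sym_span0.
rewrite -{1}[g * h]scale1r -scalerBl; apply: sym_spanZ.
have [->|g0] := eqVneq g 0; first by rewrite mul0r; apply: sym_span0.
have [->|h0] := eqVneq h 0; first by rewrite mulr0; apply: sym_span0.
have [nu /andP[sym1 sym2]] :=
  hsplit l m (skew_hom lg g0 gskew) (skew_hom mh h0 hskew) anti_lm.
have uu : comp (l + m) (hom_unit (l + nu) * hom_unit (m - nu)).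
  have := compM (comp_hom_unit (l + nu)) (comp_hom_unit (m - nu)).
  by rewrite addrACA subrr addr0.
have [c ->] := comp_proportional (compM lg mh) uu (hom_unitM_neq0 _ _).
by apply/sym_spanZ/sym_span_mul; apply: sym_hom_unit.
Qed.

Lemma skew_hom_decomp x : inv x = - x ->
  exists (s : seq (lattice n)) (g : lattice n -> A),
    (forall l, comp l (g l) /\ inv (g l) = - g l) /\ x = \sum_(l <- s) g l.
Proof.
move=> xskew; case: htorus => _ _ decomp _; have [s [f [fl xE]]] := decomp x.
exists s, (fun l => 2%:R^-1 *: (f l - inv (f l))); split.
  move=> l; rewrite invZ invB invK -scalerN opprB; split=> //.
  by apply/compZ/compD; rewrite // -scaleN1r; apply/compZ/comp_inv.
rewrite -scaler_sumr sumrB -inv_sum -xE xskew opprK -mulr2n -scaler_nat.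
by rewrite scalerA mulVf ?two_neq0 ?scale1r.
Qed.

Lemma commutator_sym_span x y : splittable -> inv x = - x -> inv y = - y ->
  sym_span (x * y - y * x).
Proof.
move=> hsplit /skew_hom_decomp[s [g [gs ->]]] /skew_hom_decomp[t [h [ht ->]]].
rewrite mulr_suml mulr_sumr -sumrB; apply: sym_span_sum => l.
rewrite mulr_sumr mulr_suml -sumrB; apply: sym_span_sum => m.
have [[gl gskew] [hm hskew]] := (gs l, ht m).
exact: commutator_hom_sym_span hsplit gl hm gskew hskew.
Qed.

End SymmetricProducts.

Lemma not_splittable : ~ splittable ->
  exists la mu, [/\ skew la, skew mu, anti la mu &
    forall nu, skew (la + nu) || skew (mu - nu)].
Proof.
move=> nsplit; apply: NNPP => none; apply: nsplit => la mu sla smu alm.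
apply: NNPP => nonu; apply: none; exists la, mu; split=> // nu.
by apply/negPn/negP; rewrite negb_or => h; apply: nonu; exists nu.
Qed.

Section Obstruction.
Variables la mu : lattice n.
Hypotheses (sla : skew la) (smu : skew mu) (alm : anti la mu).
Hypothesis obstructed : forall nu, skew (la + nu) || skew (mu - nu).

Definition in_ker r := ~~ anti la r && ~~ anti mu r.

Definition ker_proj nu :=
  nu - (if anti mu nu then la else 0) - (if anti la nu then mu else 0).

Lemma in_ker_proj nu : in_ker (ker_proj nu).
Proof.
rewrite /in_ker /ker_proj !antiB !anti_if !anti_ll (antiC mu la) alm.
by case: (anti la nu); case: (anti mu nu).
Qed.

Lemma ker_projE nu :
  nu = ker_proj nu + ((if anti mu nu then la else 0) + (if anti la nu then mu else 0)).
Proof.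
rewrite /ker_proj; set a := (if _ then _ else _); set b := (if _ then _ else _).
by rewrite [a + b]addrC addrA !subrK.
Qed.

Lemma in_kerD a b : in_ker a -> in_ker b -> in_ker (a + b).
Proof.
case/andP=> /negbTE a1 /negbTE a2 /andP[/negbTE b1 /negbTE b2].
by rewrite /in_ker !antiD a1 a2 b1 b2.
Qed.

Lemma sym_in_ker r : in_ker r -> ~~ skew r.
Proof.
case/andP=> /negbTE ar1 /negbTE ar2; apply/negP=> sr; move: (obstructed r).
by rewrite !skewD skewN antiN sla smu sr ar1 ar2.
Qed.

Lemma skew_notin_ker nu : ~~ in_ker nu -> skew nu.
Proof.
rewrite {2}(ker_projE nu) skewD (negbTE (sym_in_ker (in_ker_proj nu))) /=.
have /andP[/negbTE k1 /negbTE k2] := in_ker_proj nu.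
rewrite antiD !anti_if !(antiC (ker_proj nu)) k1 k2 !andbF !addbF.
rewrite /in_ker; case: (anti mu nu); case: (anti la nu) => //= _.
- by rewrite skewD sla smu alm.
- by rewrite addr0.
- by rewrite add0r.
Qed.

Lemma anti_in_ker r s : in_ker r -> anti s r = false.
Proof.
move=> rker; have /andP[/negbTE r1 /negbTE r2] := rker.
have rp : anti r (ker_proj s) = false.
  apply/negbTE; have := sym_in_ker (in_kerD rker (in_ker_proj s)).
  by rewrite skewD (negbTE (sym_in_ker rker)) (negbTE (sym_in_ker (in_ker_proj s))).
rewrite antiC (ker_projE s) antiD rp !antiD !anti_if (antiC r la) (antiC r mu) r1 r2.
by rewrite !andbF.
Qed.

Lemma anti_notin_ker a b : ~~ in_ker a -> ~~ in_ker b -> ~~ in_ker (a + b) -> anti a b.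
Proof.
move=> /skew_notin_ker sa /skew_notin_ker sb /skew_notin_ker sab.
by move: sab; rewrite skewD sa sb; case: anti.
Qed.

Lemma obstructed_basis : exists (i j : 'I_n) (E : 'M[int]_n),
  [/\ i != j, E \in unitmx, ~~ in_ker (row i E), ~~ in_ker (row j E)
    & ~~ in_ker (row i E + row j E)]
  /\ forall k, k != i -> k != j -> in_ker (row k E).
Proof.
have [i [j [E [[ij Eu ai aj bj] kerE]]]] :=
  parity_chars_adapted_basis (antiD la) (antiD mu) alm (negbT (anti_ll la))
    (etrans (antiC mu la) alm).
exists i, j, E; split; last exact: kerE.
by split; rewrite // /in_ker ?antiD ?ai ?bj ?(negbTE aj) ?andbF.
Qed.

End Obstruction.

End GradedInvolution.

Definition ord_second m : 'I_m.+2 := lift ord0 ord0.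
Definition ord_shift2 m (t : 'I_m) : 'I_m.+2 := lift ord0 (lift ord0 t).

(* The degree in [Z^(q+2)] of the monomial [x1^a x2^b t^c] of [Q(-1) (x) R_q]. *)
Definition exponent_row m (e : int * int * 'rV[int]_m) : 'rV[int]_m.+2 :=
  e.1.1 *: delta_mx 0 ord0 + e.1.2 *: delta_mx 0 (ord_second m)
  + \sum_t e.2 0 t *: delta_mx 0 (ord_shift2 t).

Definition row_exponent m (w : 'rV[int]_m.+2) : int * int * 'rV[int]_m :=
  (w 0 ord0, w 0 (ord_second m), \row_t w 0 (ord_shift2 t)).

Lemma row_exponentK m : cancel (@row_exponent m) (@exponent_row m).
Proof.
move=> w; rewrite {2}(row_sum_delta w) big_ord_recl big_ord_recl addrA /=.
by congr (_ + _); apply: eq_bigr => t _; rewrite mxE.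
Qed.

Lemma exponent_row_entry m (e : int * int * 'rV[int]_m) i :
  exponent_row e 0 i = e.1.1 * (i == ord0)%:R + e.1.2 * (i == ord_second m)%:R
     + \sum_t e.2 0 t * (i == ord_shift2 t)%:R.
Proof. by rewrite !mxE summxE; congr (_ + _); apply: eq_bigr => t _; rewrite !mxE. Qed.

Lemma exponent_rowK m : cancel (@exponent_row m) (@row_exponent m).
Proof.
case=> [[a b] c]; rewrite /row_exponent !exponent_row_entry /=.
congr (_, _, _).
- by rewrite mulr1 !mulr0 addr0 big1 ?addr0 // => t _; rewrite mulr0.
- by rewrite mulr1 !mulr0 add0r big1 ?addr0 // => t _; rewrite mulr0.
apply/rowP=> t; rewrite mxE exponent_row_entry /= !mulr0 !add0r.
rewrite (bigD1 t) //= eqxx mulr1 big1 ?addr0 // => t' t't.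
by rewrite /ord_shift2 !(inj_eq lift_inj) eq_sym (negbTE t't) mulr0.
Qed.

Section AdaptedBasisIso.
Variables (k : fieldType) (A : unitAlgType k) (m : nat).
Variables (comp : lattice m.+2 -> A -> Prop) (inv : A -> A).
Hypothesis char_neq2 : 2 \notin [pchar k].
Hypotheses (htorus : assoc_torus comp) (hinv : graded_involution comp inv).
Variable P : 'M[int]_m.+2.
Hypothesis Pu : P \in unitmx.

Local Notation u l := (hom_unit htorus l).
Local Notation skew := (skew inv htorus).
Local Notation anti := (anti inv htorus).

Hypotheses (skew_x1 : skew (row 0 P)) (skew_x2 : skew (row (ord_second m) P)).
Hypothesis anti_x1x2 : anti (row 0 P) (row (ord_second m) P).
Hypothesis sym_t : forall t, ~~ skew (row (ord_shift2 t) P).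
Hypothesis central_t : forall t l, anti l (row (ord_shift2 t) P) = false.

Local Notation mono :=
  (monomial (u (row 0 P)) (u (row (ord_second m) P)) (fun t => u (row (ord_shift2 t) P))).

Lemma monomial_deg e : exponent_row e *m P =
  e.1.1 *: row 0 P + e.1.2 *: row (ord_second m) P + \sum_t e.2 0 t *: row (ord_shift2 t) P.
Proof.
rewrite !mulmxDl mulmx_suml -!scalemxAl -!rowE; congr (_ + _).
by apply: eq_bigr => t _; rewrite -scalemxAl -rowE.
Qed.

Lemma comp_monomial e : comp (exponent_row e *m P) (mono e).
Proof.
have comp_u l z : comp (z *: l) (u l ^ z).
  exact: comp_exprz (comp_hom_unit htorus l) (hom_unit_unit htorus l).
rewrite monomial_deg; do 2?apply: (compM htorus) => //.
exact: comp_prod.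
Qed.

Lemma monomial_unit e : mono e \is a GRing.unit.
Proof.
have u_unit l z : u l ^ z \is a GRing.unit by apply/unitrXz/hom_unit_unit.
by rewrite !unitrMl ?unitr_prod.
Qed.

Lemma monomial_span x : exists (s : seq (int * int * 'rV[int]_m))
    (c : int * int * 'rV[int]_m -> k), x = \sum_(e <- s) c e *: mono e.
Proof.
have [_ _ decomp _] := htorus; have [s [f [fl ->]]] := decomp x.
have fE e : exists c, f (exponent_row e *m P) = c *: mono e.
  exact: comp_proportional (fl _) (comp_monomial e) (unit_neq0 (monomial_unit e)).
pose c e := proj1_sig (constructive_indefinite_description _ (fE e)).
exists [seq row_exponent (l *m invmx P) | l <- s], c; rewrite big_map.
apply: eq_bigr => l _; set e := row_exponent (l *m invmx P).
have lE : exponent_row e *m P = l by rewrite row_exponentK mulmxKV.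
by rewrite -[in LHS]lE; exact: proj2_sig (constructive_indefinite_description _ (fE e)).
Qed.

Lemma monomial_free (s : seq (int * int * 'rV[int]_m)) c : uniq s ->
  \sum_(e <- s) c e *: mono e = 0 -> forall e, e \in s -> c e = 0.
Proof.
move=> us s0 e es; have [_ _ _ indep] := htorus.
pose deg e' := exponent_row e' *m P.
have degK : cancel deg (fun l => row_exponent (l *m invmx P)).
  by move=> e'; rewrite /deg mulmxK // exponent_rowK.
pose f l := c (row_exponent (l *m invmx P)) *: mono (row_exponent (l *m invmx P)).
have fl l : comp l (f l).
  apply: (compZ htorus); have := comp_monomial (row_exponent (l *m invmx P)).
  by rewrite row_exponentK mulmxKV.
have fdeg e' : f (deg e') = c e' *: mono e' by rewrite /f degK.
have uniq_deg : uniq [seq deg e' | e' <- s] by rewrite (map_inj_uniq (can_inj degK)).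
have := indep _ f uniq_deg fl; rewrite big_map (eq_bigr _ (fun e' _ => fdeg e')).
move=> /(_ s0 _ (map_f deg es)) /eqP.
by rewrite fdeg scaler_eq0 (negbTE (unit_neq0 (monomial_unit e))) orbF => /eqP.
Qed.

Lemma iso_of_adapted_basis : iso_Qm1_tensor_R inv m.
Proof.
have cu := commute_hom_unit char_neq2 htorus hinv.
have iu := inv_hom_unit char_neq2 htorus hinv.
exists (u (row 0 P)), (u (row (ord_second m) P)), (fun t => u (row (ord_shift2 t) P)).
split; first by split; [|split=> [|t]]; apply: hom_unit_unit.
split; first split.
- by rewrite (cu (row 0 P)) anti_x1x2 expr1 scaleN1r opprK.
- by split; [|split] => [t|t|t t'];
    rewrite (cu _ (row (ord_shift2 t) P)) central_t expr0 scale1r.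
split; last by split; [exact: monomial_span | exact: monomial_free].
by split; [|split=> [|t]];
  rewrite iu ?skew_x1 ?skew_x2 ?(negbTE (sym_t t)) ?expr1 ?scaleN1r ?expr0 ?scale1r.
Qed.

End AdaptedBasisIso.

Lemma perm_ord01 m (i j : 'I_m.+2) : i != j ->
  exists s : {perm 'I_m.+2}, s ord0 = i /\ s (ord_second m) = j.
Proof.
move=> ij; set j1 := tperm ord0 i j.
have j10 : j1 != ord0.
  by apply: contra ij => /eqP j10; rewrite -(tpermK ord0 i j) -/j1 j10 tpermL.
have o10 : ord_second m != ord0 by rewrite eq_sym; apply: neq_lift.
exists (tperm (ord_second m) j1 * tperm ord0 i)%g; rewrite !permM; split.
  by rewrite (tpermD o10 j10) tpermL.
by rewrite tpermL tpermK.
Qed.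

Lemma obstructed_iso (k : fieldType) (A : unitAlgType k) n
    (comp : lattice n -> A -> Prop) (inv : A -> A) (char_neq2 : 2 \notin [pchar k])
    (htorus : assoc_torus comp) (hinv : graded_involution comp inv) la mu :
    skew inv htorus la -> skew inv htorus mu -> anti inv htorus la mu ->
    (forall nu, skew inv htorus (la + nu) || skew inv htorus (mu - nu)) ->
  exists q, iso_Qm1_tensor_R inv q.
Proof.
case: n comp htorus hinv la mu => [|[|m]] comp htorus hinv la mu sla smu alm obstructed;
  have [i [j [E [[ij Eu ki kj kij] kE]]]] := obstructed_basis char_neq2 hinv alm.
- by move: (ltn_ord i).
- by rewrite (ord1 i) (ord1 j) eqxx in ij.
have skew_out := skew_notin_ker char_neq2 hinv sla smu alm obstructed.
have sym_in := sym_in_ker char_neq2 hinv sla smu obstructed.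
have anti_out := anti_notin_ker char_neq2 hinv sla smu alm obstructed.
have central_in := anti_in_ker char_neq2 hinv sla smu alm obstructed.
have [s [s0 s1]] := perm_ord01 ij.
have row_sE r : row r (perm_mx s *m E) = row (s r) E.
  by apply/rowP=> b; rewrite -row_permE !mxE.
have in_ker_t t : in_ker inv htorus la mu (row (s (ord_shift2 t)) E).
  by apply: kE; rewrite -?s0 -?s1 (inj_eq perm_inj) eq_sym ?(inj_eq lift_inj) neq_lift.
exists m; apply: (@iso_of_adapted_basis _ _ m comp inv char_neq2 htorus hinv (perm_mx s *m E)).
- by rewrite unitmx_mul unitmx_perm.
- by rewrite row_sE s0 skew_out.
- by rewrite row_sE s1 skew_out.
- by rewrite !row_sE s0 s1 anti_out.
- by move=> t; rewrite row_sE sym_in.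
by move=> t l; rewrite row_sE central_in.
Qed.

Theorem lemma8p1 (k : closedFieldType) (hchar : [pchar k] =i pred0)
    (A : unitAlgType k) (n : nat) (comp : lattice n -> A -> Prop)
    (inv : A -> A)
    (htorus : assoc_torus comp)
    (hinv : graded_involution comp inv)
    (hnotiso : forall q : nat, ~ iso_Qm1_tensor_R inv q) :
  forall x y : A, inv x = - x -> inv y = - y ->
    in_span_sym_products inv (x * y - y * x).
Proof.
move=> x y xskew yskew; have char_neq2 : 2 \notin [pchar k] by rewrite hchar.
apply: (commutator_sym_span (htorus := htorus) char_neq2 hinv _ xskew yskew).
apply: NNPP => /not_splittable [la [mu [sla smu alm obstructed]]].
have [q] := obstructed_iso char_neq2 hinv sla smu alm obstructed.
exact: hnotiso.
Qed.
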